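(* Let $\Omega\subseteq\mathbb{R}^n$ be open, $\nu,C_1,\dots,C_{n-1}\in\mathcal{C}^\infty(\Omega,\mathbb{R})$, $H:=C_{n-1}$, and $X$ the vector field on $\Omega$ with components $X_i=\nu\cdot\frac{\partial(C_1,\dots,C_{n-2},x_i,H)}{\partial(x_1,\dots,x_n)}$. Let $\overline{x}_e\in\mathcal{E}^{C_{n-1}}_{C_1,\dots,C_{n-2}}$ be a non-degenerate regular equilibrium point of $X$, let $\Omega'\subseteq\Omega$ be any open neighborhood of $\overline{x}_e$ and $\Phi:\Omega'\to W':=\Phi(\Omega')$ a smooth diffeomorphism. Then $$\mathcal{I}_{\Phi_\star X}(\Phi(\overline{x}_e))=\mathcal{I}_X(\overline{x}_e),$$ where $\mathcal{I}_{\Phi_\star X}(\Phi(\overline{x}_e))$ is computed from the Hamiltonian form of $\Phi_\star X$ with data $(\nu_\Phi;\Phi_\star C_1,\dots,\Phi_\star C_{n-2};\Phi_\star H)$ (in which $\Phi(\overline{x}_e)$ is again a non-degenerate regular equilibrium).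
   Context: $\langle\cdot,\cdot\rangle$ is the standard inner product, $\nabla$ the gradient, $\operatorname{Hess}F=\mathrm{D}(\nabla F)$, $\frac{\partial(\cdots)}{\partial(x_1,\dots,x_n)}$ a Jacobian determinant. For decomposable $k$-vectors, $\langle u_1\wedge\dots\wedge u_k,v_1\wedge\dots\wedge v_k\rangle_k:=\det[\langle u_i,v_j\rangle]$. $\mathcal{E}^{C_{n-1}}_{C_1,\dots,C_{n-2}}:=\{\overline{x}\in\Omega:\nu(\overline{x})\neq0,\ \nabla C_1\wedge\dots\wedge\nabla C_{n-2}(\overline{x})\neq0,\ \nabla C_1\wedge\dots\wedge\nabla C_{n-1}(\overline{x})=0\}$. For $\overline{x}_e$ in it, $\overrightarrow{\lambda_e}\in\mathbb{R}^{n-2}$ is the unique vector with $\nabla H(\overline{x}_e)+\sum_i\lambda^e_i\nabla C_i(\overline{x}_e)=0$, $F_{\overrightarrow{\lambda_e}}:=H+\sum_i\lambda^e_iC_i$; non-degeneracy means $A:=\operatorname{Hess}F_{\overrightarrow{\lambda_e}}(\overline{x}_e)$ invertible, and $\mathcal{I}_X(\overline{x}_e):=\nu^2(\overline{x}_e)\det(A)\langle A^{-1}\nabla C_1(\overline{x}_e)\wedge\dots\wedge A^{-1}\nabla C_{n-2}(\overline{x}_e),\nabla C_1(\overline{x}_e)\wedge\dots\wedge\nabla C_{n-2}(\overline{x}_e)\rangle_{n-2}$. For functions, $\Phi_\star f:=f\circ\Phi^{-1}$; $\Phi_\star X$ is the push-forward; $\nu_\Phi:=\Phi_\star\nu\cdot\Phi_\star\det(\mathrm{D}\Phi)$;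 $\Phi_\star X$ has components $\nu_\Phi\cdot\frac{\partial(\Phi_\star C_1,\dots,\Phi_\star C_{n-2},y_i,\Phi_\star H)}{\partial(y_1,\dots,y_n)}$, and $\mathcal{I}_{\Phi_\star X}(\Phi(\overline{x}_e))$ is defined by the same formula as $\mathcal{I}_X$ with $\nu,C_i,H,\overline{x}_e,\overrightarrow{\lambda_e}$ replaced by $\nu_\Phi,\Phi_\star C_i,\Phi_\star H,\Phi(\overline{x}_e),\overrightarrow{\lambda_e}$. *)

From HB Require Import structures.
From mathcomp Require Import all_boot all_order all_algebra.
From mathcomp Require Import all_classical all_reals all_analysis.
Set Implicit Arguments. Unset Strict Implicit. Unset Printing Implicit Defensive.
Import Order.TTheory GRing.Theory Num.Theory.
Import numFieldNormedType.Exports.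
Local Open Scope classical_set_scope.
Local Open Scope ring_scope.

Section Defs.
Variable R : realType.

Definition evec (n : nat) (i : 'I_n) : 'rV[R]_n := delta_mx 0 i.

Definition partial (n : nat) (i : 'I_n) (f : 'rV[R]_n -> R) : 'rV[R]_n -> R :=
  fun x => 'D_(evec i) f x.

Definition iter_partial (n : nat) (s : seq 'I_n) (f : 'rV[R]_n -> R) :=
  foldr (fun i g => partial i g) f s.

Definition smooth_on (n : nat) (U : set 'rV[R]_n) (f : 'rV[R]_n -> R) :=
  forall (s : seq 'I_n) (x : 'rV[R]_n), U x -> differentiable (iter_partial s f) x.

Definition smooth_map_on (n : nat) (U : set 'rV[R]_n) (P : 'rV[R]_n -> 'rV[R]_n) :=
  forall k : 'I_n, smooth_on U (fun x => P x 0 k).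

Definition grad (n : nat) (f : 'rV[R]_n -> R) (x : 'rV[R]_n) : 'rV[R]_n :=
  \row_j partial j f x.

Definition hess (n : nat) (f : 'rV[R]_n -> R) (x : 'rV[R]_n) : 'M[R]_n :=
  \matrix_(i, j) partial j (partial i f) x.

Definition jac (n : nat) (P : 'rV[R]_n -> 'rV[R]_n) (x : 'rV[R]_n) : 'M[R]_n :=
  \matrix_(i, j) partial j (fun y => P y 0 i) x.

Definition gradmx (k n : nat) (f : 'I_k -> 'rV[R]_n -> R) (x : 'rV[R]_n)
  : 'M[R]_(k, n) := \matrix_(i, j) partial j (f i) x.

Definition ip (n : nat) (u v : 'rV[R]_n) : R := (u *m v^T) 0 0.

(* action of a matrix A on a vector u (u as a column vector, A u) *)
Definition mxapp (n : nat) (A : 'M[R]_n) (u : 'rV[R]_n) : 'rV[R]_n := u *m A^T.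

(* the decomposable k-vector u_1 /\ ... /\ u_k (rows of M) is zero iff all
   its coordinates on the basis e_{i_1} /\ ... /\ e_{i_k}, i_1 < ... < i_k,
   (the k x k minors) vanish *)
Definition wedge_zero (k n : nat) (M : 'M[R]_(k, n)) :=
  forall f : 'I_k -> 'I_n, {homo f : i j / (i < j)%N} -> \det (colsub f M) = 0.

Definition wedge_ip (k n : nat) (u v : 'I_k -> 'rV[R]_n) : R :=
  \det (\matrix_(i, j) ip (u i) (v j)).

Lemma addn11 (m : nat) : (m + 1 + 1 = m.+2)%N.
Proof. by rewrite !addn1. Qed.

(* Hamiltonian vector field X, n = m.+2, Casimirs C_1..C_m, H = C_{n-1}:
   X_i = nu * d(C_1,..,C_m,x_i,H)/d(x_1,..,x_n) *)
Definition ham_field (m : nat) (nu : 'rV[R]_m.+2 -> R)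
  (C : 'I_m -> 'rV[R]_m.+2 -> R) (H : 'rV[R]_m.+2 -> R) (x : 'rV[R]_m.+2)
  : 'rV[R]_m.+2 :=
  \row_i (nu x * \det (castmx (addn11 m, erefl m.+2)
                 (col_mx (col_mx (gradmx C x) (evec i)) (grad H x)))).

Definition in_E (m : nat) (Om : set 'rV[R]_m.+2) (nu : 'rV[R]_m.+2 -> R)
  (C : 'I_m -> 'rV[R]_m.+2 -> R) (H : 'rV[R]_m.+2 -> R) (x : 'rV[R]_m.+2) :=
  [/\ Om x, nu x != 0, ~ wedge_zero (gradmx C x)
    & wedge_zero (col_mx (gradmx C x) (grad H x))].

Definition Flam (m : nat) (C : 'I_m -> 'rV[R]_m.+2 -> R) (H : 'rV[R]_m.+2 -> R)
  (lam : 'rV[R]_m) : 'rV[R]_m.+2 -> R :=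
  fun x => H x + \sum_(i < m) lam 0 i * C i x.

Definition indexI (m : nat) (nu : 'rV[R]_m.+2 -> R)
  (C : 'I_m -> 'rV[R]_m.+2 -> R) (H : 'rV[R]_m.+2 -> R) (lam : 'rV[R]_m)
  (x : 'rV[R]_m.+2) : R :=
  let A := hess (Flam C H lam) x in
  nu x ^+ 2 * \det A *
  wedge_ip (fun i => mxapp (invmx A) (grad (C i) x)) (fun i => grad (C i) x).

(* nu_Phi = Phi_* nu . Phi_* det(D Phi), with Psi = Phi^{-1} *)
Definition nu_push (n : nat) (nu : 'rV[R]_n -> R) (P Q : 'rV[R]_n -> 'rV[R]_n)
  : 'rV[R]_n -> R := fun y => nu (Q y) * \det (jac P (Q y)).

End Defs.

From HB Require Import structures.
From mathcomp Require Import all_boot all_order all_algebra.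
From mathcomp Require Import all_classical all_reals all_analysis.
From mathcomp Require Import perm ring.
Import Order.TTheory GRing.Theory Num.Theory.
Import numFieldNormedType.Exports.
Local Open Scope classical_set_scope.
Local Open Scope ring_scope.

(* A diffeomorphism acts on the data at the equilibrium through the Jacobians
   J = D Psi (Phi xe) and K = D Phi xe, which are inverse to each other since
   Psi o Phi = id near xe.  By the chain rule every gradient is multiplied by J
   on the right; since xe is a critical point of F_lambda, the second-order term
   of the chain rule vanishes and the Hessian transforms by congruence,
   A |-> J^T A J.  The conditions defining E are rank conditions on gradient
   matrices, hence invariant under J.  In the index, the Gram determinant of the
   A^-1 grad C_i against the grad C_j is unchanged because
   (J^T A J)^-1 = K A^-1 K^T, and det (J^T A J) = det J ^ 2 * det A is
   compensated by the factor det K ^ 2 coming from nu_Phi ^ 2. *)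

Set Implicit Arguments. Unset Strict Implicit. Unset Printing Implicit Defensive.

Lemma exists_perm_increasing k n (f : 'I_k -> 'I_n) : injective f ->
  exists s : 'S_k, {homo (fun i => f (s i)) : i j / (i < j)%N}.
Proof.
case: k f => [|k] f finj; first by exists 1%g => -[].
pose t := enum [set f i | i in 'I_k.+1]%SET.
have size_t : size t = k.+1 by rewrite -cardE card_imset // card_ord.
pose g (i : 'I_k.+1) := nth (f ord0) t i.
have g_im i : exists j, f j == g i.
  have : g i \in [set f i | i in 'I_k.+1]%SET by rewrite -mem_enum mem_nth // size_t.
  by case/imsetP => j _ ->; exists j.
pose h i := xchoose (g_im i).
have fh i : f (h i) = g i by apply/eqP; exact: xchooseP (g_im i).
have h_inj : injective h.
  move=> i j /(congr1 f); rewrite !fh => /eqP.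
  by rewrite nth_uniq ?size_t ?ltn_ord ?enum_uniq // => /eqP /val_inj.
have lt_trans : transitive (relpre (@nat_of_ord n) ltn).
  by move=> a b c; apply: ltn_trans.
have t_sorted : sorted (relpre (@nat_of_ord n) ltn) t.
  apply: sorted_filter => //; rewrite -enumT -sorted_map val_enum_ord.
  exact: iota_ltn_sorted.
exists (perm h_inj) => i j ij /=; rewrite !permE !fh.
by apply: (sorted_ltn_nth lt_trans); rewrite ?inE ?size_t.
Qed.

Section LinearAlgebra.
Context {R : realType}.

Lemma det_colsub_eq0 k n (M : 'M[R]_(k, n)) (f : 'I_k -> 'I_n) :
  (\rank M < k)%N -> \det (colsub f M) = 0.
Proof.
move=> rkM; apply/eqP; apply: contraTT rkM => /negPf detf.
have Uf : colsub f M \in unitmx by rewrite unitmxE unitfE detf.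
rewrite -leqNgt -[k in (k <= _)%N](mxrank_unit Uf).
by rewrite -[M in colsub f M]mulmx1 -mulmx_colsub mxrankM_maxl.
Qed.

Lemma exists_det_colsub_neq0 k n (M : 'M[R]_(k, n)) : \rank M = k ->
  exists2 f : 'I_k -> 'I_n, {homo f : i j / (i < j)%N} & \det (colsub f M) != 0.
Proof.
move=> rkM; have rfM : row_full M^T by rewrite /row_full mxrank_tr rkM.
set f := fullrankfun rfM.
have Uf : colsub f M \in unitmx.
  by rewrite -unitmx_tr trmx_mxsub fullrowsub_unit.
have [s incr] := exists_perm_increasing (@fullrankfun_inj _ _ _ _ rfM).
exists (fun i => f (s i)) => //.
have -> : colsub (fun i => f (s i)) M = col_perm s (colsub f M).
  by apply/matrixP => a b; rewrite !mxE.
by rewrite col_permE det_mulmx det_perm mulf_eq0 negb_or signr_eq0 andbT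
  -unitfE -unitmxE.
Qed.

Lemma wedge_zeroP k n (M : 'M[R]_(k, n)) : wedge_zero M <-> (\rank M < k)%N.
Proof.
split=> [wz|rkM f _]; last exact: det_colsub_eq0.
rewrite ltn_neqAle rank_leq_row andbT; apply/eqP => /exists_det_colsub_neq0[f incr].
by rewrite wz ?eqxx.
Qed.

Lemma wedge_zero_mulmx k n (M : 'M[R]_(k, n)) (J : 'M[R]_n) :
  J \in unitmx -> wedge_zero (M *m J) <-> wedge_zero M.
Proof. by move=> UJ; rewrite !wedge_zeroP mxrankMfree // row_free_unit. Qed.

Lemma invmx_congruence n (A J K : 'M[R]_n) :
  J *m K = 1%:M -> A \in unitmx -> invmx (J^T *m A *m J) = K *m invmx A *m K^T.
Proof.
move=> JK UA; have [UJ _] := mulmx1_unit JK.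
have KJ : K *m J = 1%:M.
  by rewrite -[K](mulKmx UJ) JK mulmx1 mulVmx.
have UA' : J^T *m A *m J \in unitmx by rewrite !unitmx_mul unitmx_tr UJ UA.
rewrite -[RHS](mulKmx UA') -!mulmxA [J *m (K *m _)]mulmxA JK mul1mx.
rewrite [A *m (invmx A *m _)]mulmxA mulmxV // mul1mx -trmx_mul KJ trmx1.
by rewrite mulmx1.
Qed.

Definition index_mx k n (nu0 : R) (A : 'M[R]_n) (u : 'I_k -> 'rV[R]_n) :=
  nu0 ^+ 2 * \det A * wedge_ip (fun i => mxapp (invmx A) (u i)) u.

Lemma index_mx_congruence k n (nu0 : R) (A J K : 'M[R]_n) (u : 'I_k -> 'rV[R]_n) :
  J *m K = 1%:M -> A \in unitmx ->
  index_mx (nu0 * \det K) (J^T *m A *m J) (fun i => u i *m J) = index_mx nu0 A u.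
Proof.
move=> JK UA; rewrite /index_mx (invmx_congruence JK UA).
have -> : wedge_ip (fun i => mxapp (K *m invmx A *m K^T) (u i *m J))
            (fun i => u i *m J) = wedge_ip (fun i => mxapp (invmx A) (u i)) u.
  congr (\det _); apply/matrixP => i j; rewrite !mxE /ip /mxapp.
  rewrite !trmx_mul !trmxK !mulmxA -[_ *m J *m K]mulmxA JK mulmx1.
  by rewrite -[_ *m K^T *m J^T]mulmxA -trmx_mul JK trmx1 mulmx1.
have detJK : \det J * \det K = 1 by rewrite -det_mulmx JK det1.
rewrite !det_mulmx det_tr -[RHS]mulr1 -(expr1n _ 2) -detJK; ring.
Qed.

End LinearAlgebra.


Section NearDifferentiable.
Context {R : realType} {V W : normedModType R}.

Lemma near_eq_differentiable (f g : V -> W) x :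
  {near x, f =1 g} -> differentiable f x -> differentiable g x.
Proof.
move=> fg df; have fgx : f x = g x := nbhs_singleton fg.
have dg : g \o shift x = cst (g x) + 'd f x +o_ 0 id.
  apply/eqaddoP => e e0.
  have fg0 : \forall y \near 0, f (y + x) = g (y + x).
    by move: fg; rewrite (near_shift 0 x) /= subr0; apply: filterS.
  have df0 := (eqaddoP _ _ _ _).1 (diff_locally df) e e0.
  near=> y.
  have fgy : f (y + x) = g (y + x) by near: y.
  have le_e : `|(f \o shift x - (cst (f x) + 'd f x)) y| <= e * `|y| by near: y.
  by move: le_e; rewrite !fctE /= -fgx -fgy.
have dgf : 'd g x = 'd f x :> (V -> W) := diff_unique (diff_continuous df) dg.
by apply/diff_locallyP; rewrite dgf; split; [exact: diff_continuous df | exact: dg].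
Unshelve. all: by end_near. Qed.

End NearDifferentiable.

Section Calculus.
Context {R : realType} {n : nat}.
Implicit Types (f : 'rV[R]_n -> R) (g h : 'rV[R]_n -> 'rV[R]_n).

Lemma partialE f x j : differentiable f x -> partial j f x = 'd f x (evec R j).
Proof. by move=> df; rewrite /partial deriveE. Qed.

Lemma diffE_partial f x v : differentiable f x ->
  'd f x v = \sum_(j < n) v 0 j * partial j f x.
Proof.
move=> df; rewrite [in LHS](row_sum_delta v) linear_sum.
by apply: eq_bigr => j _; rewrite linearZ /= partialE.
Qed.

Lemma differentiable_rV g y :
  (forall k, differentiable (fun z => g z 0 k) y) -> differentiable g y.
Proof.
move=> dg; have -> : g = \sum_(k < n) (fun z => g z 0 k *: (delta_mx 0 k : 'rV[R]_n)).
  by apply/funext => z; rewrite fct_sumE; exact: row_sum_delta.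
by apply: differentiable_sum => k; exact: differentiableZl.
Qed.

Lemma diff_rV_coord g y v k :
  (forall k, differentiable (fun z => g z 0 k) y) ->
  'd g y v 0 k = 'd (fun z => g z 0 k) y v.
Proof.
move=> dg; have dgy := differentiable_rV dg.
by rewrite -!deriveE // derive_mx ?mxE //; exact: diff_derivable.
Qed.

Lemma partial_comp f g y i :
  (forall k, differentiable (fun z => g z 0 k) y) -> differentiable f (g y) ->
  partial i (f \o g) y =
    \sum_(k < n) partial k f (g y) * partial i (fun z => g z 0 k) y.
Proof.
move=> dg df; have dgy := differentiable_rV dg.
rewrite partialE; last exact: differentiable_comp.
rewrite diff_comp //= diffE_partial //.
by apply: eq_bigr => k _; rewrite mulrC diff_rV_coord // -partialE.
Qed.

Lemma partial2_comp f g y0 i j :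
  (\forall y \near y0, forall k, differentiable (fun z => g z 0 k) y) ->
  (forall k l, differentiable (partial l (fun z => g z 0 k)) y0) ->
  (\forall y \near y0, differentiable f (g y)) ->
  (forall k, differentiable (partial k f) (g y0)) ->
  partial j (partial i (f \o g)) y0 =
   \sum_(k < n) ((\sum_(l < n) partial l (partial k f) (g y0) *
                     partial j (fun z => g z 0 l) y0) * partial i (fun z => g z 0 k) y0
              + partial k f (g y0) * partial j (partial i (fun z => g z 0 k)) y0).
Proof.
move=> dg d2g df d2f.
have dg0 := nbhs_singleton dg; have dgy0 := differentiable_rV dg0.
pose h k := (partial k f \o g) * partial i (fun z => g z 0 k).
have chain : \forall y \near y0, partial i (f \o g) y = (\sum_(k < n) h k) y.
  near=> y; rewrite fct_sumE partial_comp //; [by near: y | by near: y].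
rewrite /partial (near_eq_derive _ chain) derive_sum; last first.
  move=> k; apply/diff_derivable/differentiableM => //.
  exact: differentiable_comp.
apply: eq_bigr => k _; rewrite /h deriveM; last 2 first.
- exact/diff_derivable/differentiable_comp.
- exact: diff_derivable.
have := partial_comp j dg0 (d2f k); rewrite /partial => ->.
by rewrite addrC mulrC.
Unshelve. all: by end_near. Qed.

Lemma partial_coord i j (x : 'rV[R]_n) :
  partial j (fun z : 'rV[R]_n => z 0 i) x = (j == i)%:R.
Proof.
have := @derive_mx R _ 1 n id x (evec R j) (@derivable_id _ _ x (evec R j)).
rewrite derive_id => /matrixP /(_ 0 i); rewrite !mxE /partial => <-.
by rewrite eqxx eq_sym.
Qed.

Lemma jac_comp_id g h x :
  (forall k, differentiable (fun z => g z 0 k) x) ->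
  (forall k, differentiable (fun z => h z 0 k) (g x)) ->
  (\forall z \near x, h (g z) = z) ->
  jac h (g x) *m jac g x = 1%:M.
Proof.
move=> dg dh hg; apply/matrixP => i j.
rewrite mxE; under eq_bigr do rewrite !mxE.
rewrite -partial_comp // mxE eq_sym -(partial_coord i j x).
by apply: near_eq_derive; apply: filterS hg => z /= ->.
Qed.

Lemma grad_comp f g y :
  (forall k, differentiable (fun z => g z 0 k) y) -> differentiable f (g y) ->
  grad (f \o g) y = grad f (g y) *m jac g y.
Proof.
move=> dg df; apply/rowP => j; rewrite !mxE partial_comp //.
by apply: eq_bigr => k _; rewrite !mxE.
Qed.

Lemma gradmx_comp k (f : 'I_k -> 'rV[R]_n -> R) g y :
  (forall k, differentiable (fun z => g z 0 k) y) ->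
  (forall i, differentiable (f i) (g y)) ->
  gradmx (fun i => f i \o g) y = gradmx f (g y) *m jac g y.
Proof.
move=> dg df; apply/matrixP => i j.
have /rowP /(_ j) := grad_comp dg (df i).
by rewrite !mxE => ->; apply: eq_bigr => l _; rewrite !mxE.
Qed.

Lemma hess_comp_critical f g y0 :
  (\forall y \near y0, forall k, differentiable (fun z => g z 0 k) y) ->
  (forall k l, differentiable (partial l (fun z => g z 0 k)) y0) ->
  (\forall y \near y0, differentiable f (g y)) ->
  (forall k, differentiable (partial k f) (g y0)) ->
  grad f (g y0) = 0 ->
  hess (f \o g) y0 = (jac g y0)^T *m hess f (g y0) *m jac g y0.
Proof.
move=> dg d2g df d2f /rowP crit; apply/matrixP => i j.
have {}crit k : partial k f (g y0) = 0 by have := crit k; rewrite !mxE.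
rewrite mxE partial2_comp //.
under eq_bigr do rewrite crit mul0r addr0.
under eq_bigr do rewrite big_distrl /=.
rewrite exchange_big /= !mxE; apply: eq_bigr => l _.
rewrite !mxE big_distrl /=; apply: eq_bigr => k _.
by rewrite !mxE mulrC mulrA.
Qed.

End Calculus.

Section Smooth.
Context {R : realType} {n : nat}.
Variables (U : set 'rV[R]_n) (f : 'rV[R]_n -> R).
Hypothesis smooth_f : smooth_on U f.

Lemma smooth_on_differentiable x : U x -> differentiable f x.
Proof. exact: (smooth_f [::]). Qed.

Lemma smooth_on_differentiable_partial k x : U x -> differentiable (partial k f) x.
Proof. exact: (smooth_f [:: k]). Qed.

End Smooth.

Lemma smooth_map_on_near_differentiable (R : realType) n (U : set 'rV[R]_n)
    (g : 'rV[R]_n -> 'rV[R]_n) y :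
  open U -> U y -> smooth_map_on U g ->
  \forall z \near y, forall k, differentiable (fun x => g x 0 k) z.
Proof.
move=> oU Uy sg; apply: filterS (open_nbhs_nbhs (conj oU Uy)) => z Uz k.
exact: (smooth_on_differentiable (sg k) Uz).
Qed.

Lemma jac_left_inverse (R : realType) n (U : set 'rV[R]_n)
    (Phi Psi : 'rV[R]_n -> 'rV[R]_n) x :
  open U -> U x -> smooth_map_on U Phi -> smooth_map_on (Phi @` U) Psi ->
  (forall z, U z -> Psi (Phi z) = z) ->
  jac Psi (Phi x) *m jac Phi x = 1%:M.
Proof.
move=> oU Ux sPhi sPsi PsiK; apply: jac_comp_id.
- by move=> k; exact: (smooth_on_differentiable (sPhi k) Ux).
- by move=> k; apply: (smooth_on_differentiable (sPsi k)); exists x.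
- by apply: filterS PsiK _; apply: open_nbhs_nbhs.
Qed.

Section Lagrangian.
Context {R : realType} {m : nat}.
Variables (Om : set 'rV[R]_m.+2) (C : 'I_m -> 'rV[R]_m.+2 -> R).
Variables (H : 'rV[R]_m.+2 -> R) (lam : 'rV[R]_m).
Hypotheses (open_Om : open Om) (smooth_C : forall i, smooth_on Om (C i)).
Hypothesis smooth_H : smooth_on Om H.

Let F := Flam C H lam.

Lemma FlamE : F = H + \sum_(i < m) (fun z => lam 0 i * C i z).
Proof. by apply/funext => z; rewrite /F /Flam !fctE fct_sumE. Qed.

Lemma differentiable_Flam x : Om x -> differentiable F x.
Proof.
move=> Omx; rewrite FlamE; apply: differentiableD.
  exact: (smooth_on_differentiable smooth_H Omx).
apply: differentiable_sum => i; apply: differentiableM => //.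
exact: (smooth_on_differentiable (smooth_C i) Omx).
Qed.

Lemma partial_Flam k x : Om x ->
  partial k F x = partial k H x + \sum_(i < m) lam 0 i * partial k (C i) x.
Proof.
move=> Omx; have dC i := smooth_on_differentiable (smooth_C i) Omx.
rewrite /partial FlamE deriveD; last 2 first.
- exact/diff_derivable/(smooth_on_differentiable smooth_H).
- by apply/diff_derivable/differentiable_sum => i; apply: differentiableM.
rewrite derive_sum; last by move=> i; apply/diff_derivable/differentiableM.
congr (_ + _); apply: eq_bigr => i _.
by rewrite -[fun z => _]/(lam 0 i \*o C i) deriveMl //; exact: diff_derivable.
Qed.

Lemma grad_Flam x : Om x ->
  grad F x = grad H x + \sum_(i < m) lam 0 i *: grad (C i) x.
Proof.
move=> Omx; apply/rowP => k; rewrite !mxE partial_Flam // summxE.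
by congr (_ + _); apply: eq_bigr => i _; rewrite !mxE.
Qed.

Lemma differentiable_partial_Flam k x : Om x -> differentiable (partial k F) x.
Proof.
move=> Omx.
apply: (@near_eq_differentiable _ _ _
  (partial k H + \sum_(i < m) (fun z => lam 0 i * partial k (C i) z))).
  have : \forall z \near x, Om z by apply: open_nbhs_nbhs.
  by apply: filterS => z Omz; rewrite partial_Flam // !fctE fct_sumE.
apply: differentiableD; first exact: (smooth_on_differentiable_partial smooth_H k Omx).
apply: differentiable_sum => i; apply: differentiableM => //.
exact: (smooth_on_differentiable_partial (smooth_C i) k Omx).
Qed.

Lemma hess_Flam_comp (Psi : 'rV[R]_m.+2 -> 'rV[R]_m.+2) y0 :
  (\forall y \near y0, Om (Psi y)) ->
  (\forall y \near y0, forall k, differentiable (fun z => Psi z 0 k) y) ->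
  (forall k l, differentiable (partial l (fun z => Psi z 0 k)) y0) ->
  grad H (Psi y0) + \sum_(i < m) lam 0 i *: grad (C i) (Psi y0) = 0 ->
  hess (F \o Psi) y0 = (jac Psi y0)^T *m hess F (Psi y0) *m jac Psi y0.
Proof.
move=> OmPsi dPsi d2Psi crit; have Om_y0 := nbhs_singleton OmPsi.
apply: hess_comp_critical => //.
- by apply: filterS OmPsi => y; exact: differentiable_Flam.
- by move=> k; exact: differentiable_partial_Flam.
- by rewrite grad_Flam.
Qed.

End Lagrangian.

Lemma indexIE (R : realType) m nu (C : 'I_m -> 'rV[R]_m.+2 -> R) H lam x :
  indexI nu C H lam x = index_mx (nu x) (hess (Flam C H lam) x) (fun i => grad (C i) x).
Proof. by []. Qed.

Theorem theorem4p4 (R : realType) (m : nat)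
  (Om : set 'rV[R]_m.+2) (nu : 'rV[R]_m.+2 -> R)
  (C : 'I_m -> 'rV[R]_m.+2 -> R) (H : 'rV[R]_m.+2 -> R)
  (xe : 'rV[R]_m.+2) (lam : 'rV[R]_m)
  (Om' : set 'rV[R]_m.+2) (Phi Psi : 'rV[R]_m.+2 -> 'rV[R]_m.+2) :
  open Om -> smooth_on Om nu -> (forall i, smooth_on Om (C i)) -> smooth_on Om H ->
  in_E Om nu C H xe ->
  ham_field nu C H xe = 0 ->
  grad H xe + \sum_(i < m) lam 0 i *: grad (C i) xe = 0 ->
  hess (Flam C H lam) xe \in unitmx ->
  open Om' -> Om' `<=` Om -> Om' xe ->
  open (Phi @` Om') ->
  smooth_map_on Om' Phi -> smooth_map_on (Phi @` Om') Psi ->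
  (forall x, Om' x -> Psi (Phi x) = x) ->
  let W' := Phi @` Om' in
  let nuP := nu_push nu Phi Psi in
  let CP := fun i => C i \o Psi in
  let HP := H \o Psi in
  [/\ in_E W' nuP CP HP (Phi xe),
      hess (Flam CP HP lam) (Phi xe) \in unitmx
    & indexI nuP CP HP lam (Phi xe) = indexI nu C H lam xe].
Proof.
move=> oOm _ sC sH [Omxe nu0 nwC wCH] _ glam UA oOm' sOm' Om'xe oW sPhi sPsi
  PsiK W' nuP CP HP.
set y0 := Phi xe.
have Psi_y0 : Psi y0 = xe by apply: PsiK.
have W'y0 : W' y0 by exists xe.
have JK := jac_left_inverse oOm' Om'xe sPhi sPsi PsiK.
have [UJ UK] := mulmx1_unit JK.
have dPsi := smooth_map_on_near_differentiable oW W'y0 sPsi.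
have dPsi_y0 := nbhs_singleton dPsi.
have gradP f : smooth_on Om f -> grad (f \o Psi) y0 = grad f xe *m jac Psi y0.
  move=> sf; rewrite grad_comp // Psi_y0 //.
  exact: (smooth_on_differentiable sf).
have gradmxCP : gradmx CP y0 = gradmx C xe *m jac Psi y0.
  rewrite gradmx_comp // Psi_y0 // => i.
  exact: (smooth_on_differentiable (sC i)).
have hessP : hess (Flam CP HP lam) y0 =
    (jac Psi y0)^T *m hess (Flam C H lam) xe *m jac Psi y0.
  rewrite -[xe]Psi_y0; apply: (hess_Flam_comp oOm sC sH) => //; last by rewrite Psi_y0.
  - apply: filterS (open_nbhs_nbhs (conj oW W'y0)) => _ [x Om'x <-].
    by rewrite PsiK //; apply: sOm'.
  - by move=> k l; exact: (smooth_on_differentiable_partial (sPsi k) l W'y0).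
have nuP_y0 : nuP y0 = nu xe * \det (jac Phi xe) by rewrite /nuP /nu_push Psi_y0.
split; first split.
- by exists xe.
- by rewrite nuP_y0 mulf_neq0 // -unitfE -unitmxE.
- by rewrite gradmxCP wedge_zero_mulmx.
- by rewrite gradmxCP gradP // -mul_col_mx wedge_zero_mulmx.
- by rewrite hessP !unitmx_mul unitmx_tr UJ UA.
rewrite !indexIE hessP nuP_y0 -(index_mx_congruence _ _ JK UA).
by congr index_mx; apply/funext => i; rewrite gradP.
Qed.
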